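(* Let $\mathcal{M}_n=\{\rho_\theta : \theta\in\Theta\}$, $\Theta\subset\mathbb{R}^n$ open, be a regular family of density matrices on $\mathbb{C}^d$ ($d<\infty$), with parameters split as $\theta=(\theta_I,\theta_N)$, $\theta_I=(\theta_1,\dots,\theta_m)$, $\theta_N=(\theta_{m+1},\dots,\theta_n)$, $m<n$. Fix a point $\theta$ and an $m\times m$ real symmetric matrix $W_I>0$. Define $$C_{\theta_I}[W_I]=\min_{\hat\Pi_I \text{ l.u. for } \theta_I}\mathrm{Tr}\big(W_I V_{\theta_I}[\hat\Pi_I]\big),\qquad C^{\mathcal{E}_\theta}_{\theta_I}[W_I]=\inf_{\hat\Pi\in\mathcal{E}_\theta}\mathrm{Tr}\big(W_I V_{\theta_I}[\hat\Pi]\big),$$ $$C^{\lim}_{\theta_I}[W_I]=\lim_{\epsilon\to0^+}C_\theta\big[W_I\oplus\epsilon I_{n-m}\big],\qquad\text{where } C_\theta[W_n]=\min_{\hat\Pi\in\mathcal{E}_\theta}\mathrm{Tr}\big(W_nV_\theta[\hat\Pi]\big)$$ for $n\times n$ weight matrices $W_n>0$, and $I_{n-m}$ is the $(n-m)\times(n-m)$ identity. Then $$C_{\theta_I}[W_I]=C^{\mathcal{E}_\theta}_{\theta_I}[W_I]=C^{\lim}_{\theta_I}[W_I].$$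
   Context: A POVM is a finite family $\Pi=\{\Pi_x\}_{x\in\mathcal{X}}$ of positive semidefinite $d\times d$ matrices summing to the identity; it gives the probability distribution $p_\theta(x\mid\Pi)=\mathrm{tr}(\rho_\theta\Pi_x)$, and $E_\theta[\,\cdot\mid\Pi]$ denotes expectation under it. A quantum estimator for all parameters is $\hat\Pi=(\Pi,\hat\theta)$ with $\hat\theta=(\hat\theta_1,\dots,\hat\theta_n)$ real functions on $\mathcal{X}$; its MSE matrix is $V_\theta[\hat\Pi]=\big[E_\theta[(\hat\theta_i(X)-\theta_i)(\hat\theta_j(X)-\theta_j)\mid\Pi]\big]_{i,j=1}^n$, and $V_{\theta_I}[\hat\Pi]$ denotes its upper-left $m\times m$ block (indices $1,\dots,m$). An estimator for the parameters of interest is $\hat\Pi_I=(\Pi,\hat\theta_I)$ with $\hat\theta_I=(\hat\theta_1,\dots,\hat\theta_m)$, with $m\times m$ MSE matrix $V_{\theta_I}[\hat\Pi_I]=\big[E_\theta[(\hat\theta_i(X)-\theta_i)(\hat\theta_j(X)-\theta_j)\mid\Pi]\big]_{i,j=1}^m$. $\hat\Pi_I$ is locally unbiased (l.u.) for $\theta_I$ at $\theta$ if $E_\theta[\hat\theta_i(X)\mid\Pi]=\theta_i$ and $\partial_{\theta_j}E_\theta[\hat\theta_i(X)\mid\Pi]=\delta_{ij}$ at $\theta$ for all $i\in\{1,\dots,m\}$, $j\in\{1,\dots,n\}$. $\mathcal{E}_\theta$ is the set of estimators $\hat\Pi=(\Pi,\hat\theta)$ that are locally unbiased for all parameters at $\theta$,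 i.e. the same two conditions hold for all $i,j\in\{1,\dots,n\}$. Regularity: the model is smooth, its derivatives $\partial_i\rho_\theta$ are linearly independent, and there exist POVMs whose classical models $\{p_\theta(\cdot\mid\Pi)\}$ are regular with linearly independent score functions $\partial_{\theta_i}\log p_\theta(x\mid\Pi)$, $i=1,\dots,n$, at $\theta$ (so that the minima above are taken over nonempty sets and are well defined). *)

From HB Require Import structures.
From mathcomp Require Import all_boot all_order all_algebra.
From mathcomp Require Import all_classical all_reals all_analysis.
From mathcomp Require Import complex.
Set Implicit Arguments. Unset Strict Implicit. Unset Printing Implicit Defensive.
Import Order.TTheory GRing.Theory Num.Theory.
Import numFieldNormedType.Exports.
Local Open Scope classical_set_scope.
Local Open Scope ring_scope.

(* Parameter space is R^n, realised as row vectors 'rV[R]_n. *)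
Definition ev (R : realType) (n : nat) (j : 'I_n) : 'rV[R]_n := delta_mx 0 j.

Fixpoint Ck_on (R : realType) (n : nat) (U : set 'rV[R]_n) (k : nat)
    (f : 'rV[R]_n -> R) : Prop :=
  match k with
  | 0 => True
  | k'.+1 => (forall (j : 'I_n) (x : 'rV[R]_n), U x -> derivable f x (ev R j))
             /\ (forall j : 'I_n, Ck_on U k' (fun x => 'D_(ev R j) f x))
  end.

Definition smooth_on (R : realType) (n : nat) (U : set 'rV[R]_n)
    (f : 'rV[R]_n -> R) : Prop := forall k, Ck_on U k f.

Definition adj (R : realType) (p q : nat) (A : 'M[R[i]]_(p, q)) : 'M[R[i]]_(q, p) :=
  (map_mx (@conjc R) A)^T.

Definition psd (R : realType) (d : nat) (A : 'M[R[i]]_d) : Prop :=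
  forall v : 'cV[R[i]]_d, 0 <= (adj v *m A *m v) 0 0.

Definition density_matrix (R : realType) (d : nat) (A : 'M[R[i]]_d) : Prop :=
  psd A /\ \tr A = 1.

Definition povm (R : realType) (d : nat) (X : finType) (P : X -> 'M[R[i]]_d) : Prop :=
  (forall x, psd (P x)) /\ \sum_(x : X) P x = 1%:M.

Definition posdef_weight (R : realType) (m : nat) (W : 'M[R]_m) : Prop :=
  W^T = W /\ forall v : 'cV[R]_m, v != 0 -> 0 < (v^T *m W *m v) 0 0.

Section Model.
Variables (R : realType) (d n : nat) (rho : 'rV[R]_n -> 'M[R[i]]_d).

Definition drho (j : 'I_n) (t : 'rV[R]_n) : 'M[R[i]]_d :=
  \matrix_(a, b) (('D_(ev R j) (fun s => complex.Re (rho s a b)) t) +i*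
                  ('D_(ev R j) (fun s => complex.Im (rho s a b)) t))%C.

Definition prob (X : finType) (P : X -> 'M[R[i]]_d) (t : 'rV[R]_n) (x : X) : R :=
  complex.Re (\tr (rho t *m P x)).

Definition expect (X : finType) (P : X -> 'M[R[i]]_d) (f : X -> R) (t : 'rV[R]_n) : R :=
  \sum_(x : X) f x * prob P t x.

Definition regular_model (Theta : set 'rV[R]_n) : Prop :=
  open Theta
  /\ (forall t, Theta t -> density_matrix (rho t))
  /\ (forall a b, smooth_on Theta (fun s => complex.Re (rho s a b))
                  /\ smooth_on Theta (fun s => complex.Im (rho s a b)))
  /\ (forall t, Theta t -> forall c : 'I_n -> R,
        \sum_(j < n) (c j)%:C%C *: drho j t = 0 -> forall j, c j = 0).

Definition regular_classical_povm_exists (theta : 'rV[R]_n) : Prop :=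
  exists (X : finType) (P : X -> 'M[R[i]]_d),
    povm P /\ (forall x, 0 < prob P theta x) /\
    (forall c : 'I_n -> R,
       (forall x, \sum_(j < n) c j *
          ('D_(ev R j) (fun s => prob P s x) theta / prob P theta x) = 0) ->
       forall j, c j = 0).

(* MSE matrix of an estimator (P, th) with th : X -> R^p, where the
   estimated components are the parameters idx : 'I_p -> 'I_n *)
Definition mse (p : nat) (idx : 'I_p -> 'I_n) (X : finType) (P : X -> 'M[R[i]]_d)
    (th : X -> 'rV[R]_p) (theta : 'rV[R]_n) : 'M[R]_p :=
  \matrix_(i, j) expect P (fun x => (th x 0 i - theta 0 (idx i)) *
                                    (th x 0 j - theta 0 (idx j))) theta.

Definition loc_unbiased (p : nat) (idx : 'I_p -> 'I_n) (X : finType)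
    (P : X -> 'M[R[i]]_d) (th : X -> 'rV[R]_p) (theta : 'rV[R]_n) : Prop :=
  forall i : 'I_p,
    expect P (fun x => th x 0 i) theta = theta 0 (idx i) /\
    forall j : 'I_n,
      'D_(ev R j) (expect P (fun x => th x 0 i)) theta = (idx i == j)%:R.

End Model.

Section Bounds.
Variables (R : realType) (d m k : nat) (rho : 'rV[R]_(m + k) -> 'M[R[i]]_d)
          (theta : 'rV[R]_(m + k)).

Definition idxI (i : 'I_m) : 'I_(m + k) := lshift k i.

Definition C_I (W : 'M[R]_m) : R :=
  inf [set r : R | exists (X : finType) (P : X -> 'M[R[i]]_d) (th : X -> 'rV[R]_m),
         povm P /\ loc_unbiased rho idxI P th theta /\
         r = \tr (W *m mse rho idxI P th theta)].

Definition C_E (W : 'M[R]_m) : R :=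
  inf [set r : R | exists (X : finType) (P : X -> 'M[R[i]]_d)
                          (th : X -> 'rV[R]_(m + k)),
         povm P /\ loc_unbiased rho id P th theta /\
         r = \tr (W *m ulsubmx (mse rho id P th theta))].

Definition C_full (W : 'M[R]_(m + k)) : R :=
  inf [set r : R | exists (X : finType) (P : X -> 'M[R[i]]_d)
                          (th : X -> 'rV[R]_(m + k)),
         povm P /\ loc_unbiased rho id P th theta /\
         r = \tr (W *m mse rho id P th theta)].

End Bounds.

(* Restricting an estimator of E_theta to its first m components yields an
   estimator locally unbiased for theta_I with the same MSE block, so
   C_I <= C_E.  Conversely, mix the POVM of an estimator locally unbiased for
   theta_I (weight c) with that of any estimator in E_theta (weight 1 - c),
   and rescale the deviations from theta by 1/c on the theta_I components of
   the first branch and by 1/(1 - c) on the nuisance components of the second: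
   the mixture lies in E_theta and its theta_I MSE block is V_I / c, so
   C_E <= C_I / c for every c < 1.  E_theta is nonempty because the scores of
   a regular classical model admit a dual family.  Finally C_theta[W + eps I]
   is the infimum over E_theta of tr(W V_I) + eps tr(V_N), squeezed between
   C_E and the value at a near-optimal estimator.  All these infima are of
   nonnegative sets, since tr(rho Pi_x) >= 0 for positive semidefinite
   matrices; without this lower bound [inf] would be a junk value. *)

From HB Require Import structures.
From mathcomp Require Import all_boot all_order all_algebra.
From mathcomp Require Import all_classical all_reals all_analysis.
From mathcomp Require Import complex.
From mathcomp Require Import ring lra.
Set Implicit Arguments. Unset Strict Implicit. Unset Printing Implicit Defensive.
Import Order.TTheory GRing.Theory Num.Theory.
Import numFieldNormedType.Exports.
Local Open Scope classical_set_scope.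
Local Open Scope ring_scope.

Section PositiveSemidefinite.
Variables (R : realType) (d : nat).
Implicit Types (A B : 'M[R[i]]_d) (u w : 'cV[R[i]]_d).

Lemma adjD u w : adj (u + w) = adj u + adj w.
Proof. by apply/matrixP => a b; rewrite !mxE rmorphD. Qed.

Lemma adjZ (l : R[i]) u : adj (l *: u) = l^* *: adj u.
Proof. by apply/matrixP => a b; rewrite !mxE rmorphM. Qed.

Lemma adj_delta (a : 'I_d) : adj (delta_mx a 0 : 'cV[R[i]]_d) = delta_mx 0 a.
Proof. by apply/matrixP => i j; rewrite !mxE conjc_nat andbC. Qed.

Lemma delta_quad A (a b : 'I_d) :
  delta_mx 0 a *m A *m delta_mx b 0 = (A a b)%:M :> 'M[R[i]]_1.
Proof. by apply/matrixP => i j; rewrite !ord1 -rowE -colE !mxE. Qed.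

Lemma psd_quad_real A u : psd A -> (adj u *m A *m u) 0 0 \is Num.real.
Proof. by move=> /(_ u) /ger0_real. Qed.

Local Notation e c := (delta_mx c 0 : 'cV[R[i]]_d).

Lemma psd_hermitian A (a b : 'I_d) : psd A -> A b a = (A a b)^*.
Proof.
(* Polarization: the quadratic form is real along e_a + e_b and e_a + i e_b. *)
move=> psdA; set x := A a b; set y := A b a.
have quad l : (adj (e a + l *: e b) *m A
                 *m (e a + l *: e b)) 0 0
    = A a a + l * x + l^* * y + l^* * l * A b b.
  rewrite adjD adjZ !adj_delta !mulmxDl !mulmxDr -!scalemxAl -!scalemxAr.
  by rewrite !delta_quad !mxE /= !mulr1n /x /y !addrA mulrA.
have diag c : A c c \is Num.real.
  by have := psd_quad_real (e c) psdA; rewrite adj_delta delta_quad mxE mulr1n.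
have sum_real : x + y \is Num.real.
  have := psd_quad_real (e a + 1 *: e b) psdA.
  rewrite quad conjC1 !mul1r => h.
  have -> : x + y = (A a a + x + y + A b b) - A a a - A b b by ring.
  by rewrite !rpredB.
have diff_real : 'i * (x - y) \is Num.real.
  have := psd_quad_real (e a + 'i *: e b) psdA.
  rewrite quad conjCi.
  have -> : - 'i * 'i = 1 :> R[i] by rewrite mulNr -expr2 sqrCi opprK.
  rewrite mul1r => h.
  have -> : 'i * (x - y) = (A a a + 'i * x + - 'i * y + A b b) - A a a - A b b
    by ring.
  by rewrite !rpredB.
move: sum_real diff_real; rewrite !CrealE rmorphD rmorphM rmorphB /= conjCi.
move=> /eqP sum_eq /eqP diff_eq.
have dif : x^* - y^* + (x - y) = 0.
  by apply: (mulfI (neq0Ci _)); rewrite mulr0 mulrDr -diff_eq mulNr subrr.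
have : 2%:R * (y - x^*) = 0.
  have -> : 2%:R * (y - x^*) = - ((x^* + y^* - (x + y)) + (x^* - y^* + (x - y)))
    by rewrite mulr2n mulrDl mul1r; ring.
  by rewrite sum_eq subrr dif add0r oppr0.
by move/eqP; rewrite mulf_eq0 pnatr_eq0 /= subr_eq0 => /eqP.
Qed.

Lemma psd_hermsym A : psd A -> A \is hermsymmx.
Proof.
move=> psdA; apply/is_hermitianmxP; rewrite expr0 scale1r.
by apply/matrixP => a b; rewrite !mxE (psd_hermitian _ _ psdA).
Qed.

Lemma psd_congr_diag_ge0 p (U : 'M[R[i]]_(p, d)) A (j : 'I_p) :
  psd A -> 0 <= (U *m A *m map_mx Num.conj U^T) j j.
Proof.
set v := col j (map_mx Num.conj U^T).
have -> : (U *m A *m map_mx Num.conj U^T) j j = (adj v *m A *m v) 0 0.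
  have -> : adj v = row j U by apply/matrixP => a b; rewrite !mxE conjcK.
  by rewrite /v colE rowE !mulmxA -colE -!mulmxA -rowE !mxE.
exact.
Qed.

Lemma mxtrace_mul_psd_ge0 A B : psd A -> psd B -> 0 <= \tr (A *m B).
Proof.
move=> psdA psdB.
have /hermitian_normalmx/orthomx_spectralP eB := psd_hermsym psdB.
set U := spectralmx B in eB; set D := spectral_diag B in eB.
have Uu : U \is unitarymx by exact: spectral_unitarymx.
have UU : U *m map_mx Num.conj U^T = 1%:M by apply/unitarymxP.
rewrite invmx_unitary // in eB.
have eD : diag_mx D = U *m B *m map_mx Num.conj U^T.
  by rewrite eB !mulmxA UU mul1mx -!mulmxA UU mulmx1.
rewrite eB !mulmxA mxtrace_mulC !mulmxA; apply: sumr_ge0 => j _.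
rewrite mul_mx_diag mxE; apply: mulr_ge0; first exact: psd_congr_diag_ge0.
by have := psd_congr_diag_ge0 U j psdB; rewrite -eD mxE eqxx mulr1n.
Qed.
End PositiveSemidefinite.

Section Infima.
Variable R : realType.

Lemma le_of_scaled_le (x y : R) :
  0 <= y -> (forall c, 0 < c < 1 -> c * x <= y) -> x <= y.
Proof.
move=> y_ge0 scaled; rewrite leNgt; apply/negP => yx.
have x_gt0 : 0 < x by apply: le_lt_trans yx.
have c01 : 0 < (x + y) / (2 * x) < 1.
  by apply/andP; split; [apply: divr_gt0 | rewrite ltr_pdivrMr]; lra.
have := scaled _ c01.
have -> : (x + y) / (2 * x) * x = (x + y) / 2 by field; rewrite gt_eqF.
lra.
Qed.

Lemma inf_eq_of_rescaled_sub (A B : set R) :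
  B `<=` A -> B !=set0 -> (forall a, A a -> 0 <= a) ->
  (forall a c, A a -> 0 < c < 1 -> B (c^-1 * a)) -> inf A = inf B.
Proof.
move=> BA [b0 Bb0] A_ge0 rescale.
have B_lbound : has_lbound B by exists 0 => b /BA /A_ge0.
apply/eqP; rewrite eq_le; apply/andP; split.
  apply: lb_le_inf; first by exists b0.
  by move=> b /BA; apply: ge_inf; exists 0 => a /A_ge0.
apply: lb_le_inf; first by exists b0; exact: BA.
move=> a Aa; apply: le_of_scaled_le; first exact: A_ge0.
move=> c /[dup] /andP[c_gt0 _] c01.
by rewrite -ler_pdivlMl //; apply: ge_inf => //; exact: rescale.
Qed.

Lemma cvg_inf_perturbed (T : Type) (S : set T) (f g : T -> R) :
  S !=set0 -> has_lbound (f @` S) -> (forall t, S t -> 0 <= g t) ->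
  (fun eps => inf [set f t + eps * g t | t in S]) @ at_right 0 --> inf (f @` S).
Proof.
move=> S0 lbf g_ge0; apply/cvgrPdist_le => e e_gt0.
have e2_gt0 : 0 < e / 2 by lra.
have [_ [s Ss <-] fs_lt] := inf_adherent e2_gt0 (conj (image_nonempty f S0) lbf).
have gs_ge0 := g_ge0 s Ss.
near=> eps.
have eps_gt0 : 0 < eps by near: eps; exact: nbhs_right_gt.
have eps_small : eps * (g s + 1) < e / 2.
  rewrite -ltr_pdivlMr; last lra.
  by near: eps; apply: nbhs_right_lt; apply: divr_gt0; lra.
have lb_eps : lbound [set f t + eps * g t | t in S] (inf (f @` S)).
  move=> _ [t St <-]; have := ge_inf lbf (imageP f St).
  by have := mulr_ge0 (ltW eps_gt0) (g_ge0 t St); lra.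
have lo : inf (f @` S) <= inf [set f t + eps * g t | t in S].
  by apply: lb_le_inf => //; exists (f s + eps * g s), s.
have up : inf [set f t + eps * g t | t in S] <= f s + eps * g s.
  by apply: ge_inf; [exists (inf (f @` S)) | exists s].
by rewrite distrC ger0_norm ?subr_ge0 //; nra.
Unshelve. all: by end_near.
Qed.
End Infima.

Lemma exists_dual_family (F : fieldType) (n : nat) (X : finType) (s : 'I_n -> X -> F) :
  (forall c : 'I_n -> F, (forall x, \sum_l c l * s l x = 0) -> forall l, c l = 0) ->
  exists f : X -> 'I_n -> F, forall i l, \sum_x f x i * s l x = (i == l)%:R.
Proof.
move=> s_free; pose S : 'M[F]_(n, #|X|) := \matrix_(l, j) s l (enum_val j).
have /row_freeP[B SB] : row_free S.
  apply/inj_row_free => c /rowP cS0; apply/rowP => l; rewrite mxE.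
  apply: (s_free (c 0)) => x; have := cS0 (enum_rank x); rewrite !mxE => cx.
  by rewrite -[RHS]cx; apply: eq_bigr => l' _; rewrite mxE enum_rankK.
exists (fun x i => B (enum_rank x) i) => i l.
have := congr1 (fun M : 'M[F]_n => M l i) SB; rewrite !mxE eq_sym => <-.
rewrite (reindex (@enum_val _ (mem {: X}))) /=; last exact/onW_bij/enum_val_bij.
by apply: eq_bigr => j _; rewrite enum_valK mxE mulrC.
Qed.

Lemma complex_ReD (R : realType) (x y : R[i]) :
  complex.Re (x + y) = complex.Re x + complex.Re y.
Proof. by case: x; case: y. Qed.

Lemma complex_ReM (R : realType) (x y : R[i]) :
  complex.Re (x * y) = complex.Re x * complex.Re y - complex.Im x * complex.Im y.
Proof. by case: x; case: y. Qed.

Lemma complex_Re_sum (R : realType) (I : Type) (r : seq I) (F : I -> R[i]) :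
  complex.Re (\sum_(i <- r) F i) = \sum_(i <- r) complex.Re (F i).
Proof. exact: (big_morph _ (@complex_ReD R)). Qed.

Lemma complex_Re_ge0 (R : realType) (x : R[i]) : 0 <= x -> 0 <= complex.Re x.
Proof. by case: x => a b /andP[]. Qed.

Section Derivatives.
Variables (R : realType) (V : normedModType R).

Lemma derive_big (I : Type) (r : seq I) (h : I -> V -> R) (x v : V) :
  (forall i, derivable (h i) x v) ->
  is_derive x v (\sum_(i <- r) h i) (\sum_(i <- r) 'D_v (h i) x).
Proof.
move=> dh; elim/big_ind2: _ => [|f df g dg Df Dg|i _]; last exact: derivableP.
  exact: is_derive_cst.
exact: is_deriveD.
Qed.

Lemma derive_eq_on_open (U : set V) (f g : V -> R) (x v : V) :
  open U -> U x -> (forall y, U y -> f y = g y) -> 'D_v f x = 'D_v g x.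
Proof.
move=> oU Ux fg; apply: near_eq_derive.
exact: filterS fg (open_nbhs_nbhs (conj oU Ux)).
Qed.
End Derivatives.

Definition entries_derivable (R : realType) (d n : nat)
    (rho : 'rV[R]_n -> 'M[R[i]]_d) (Theta : set 'rV[R]_n) : Prop :=
  forall a b (j : 'I_n) t, Theta t ->
    derivable (fun s => complex.Re (rho s a b)) t (ev R j) /\
    derivable (fun s => complex.Im (rho s a b)) t (ev R j).

Lemma smooth_entries_derivable (R : realType) (d n : nat)
    (rho : 'rV[R]_n -> 'M[R[i]]_d) (Theta : set 'rV[R]_n) :
  (forall a b, smooth_on Theta (fun s => complex.Re (rho s a b))
               /\ smooth_on Theta (fun s => complex.Im (rho s a b))) ->
  entries_derivable rho Theta.
Proof.
move=> rho_smooth a b j t Tt.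
have [[dRe _] [dIm _]] := ((rho_smooth a b).1 1%N, (rho_smooth a b).2 1%N).
by split; [exact: dRe | exact: dIm].
Qed.

Section Model.
Variables (R : realType) (d n : nat) (rho : 'rV[R]_n -> 'M[R[i]]_d).
Variable Theta : set 'rV[R]_n.
Hypothesis Theta_open : open Theta.
Hypothesis rho_density : forall t, Theta t -> density_matrix (rho t).
Hypothesis rho_derivable : entries_derivable rho Theta.
Implicit Types (X : finType) (t : 'rV[R]_n) (j : 'I_n).

Lemma prob_ge0 X (P : X -> 'M[R[i]]_d) t x :
  povm P -> Theta t -> 0 <= prob rho P t x.
Proof.
move=> [P_psd _] /rho_density[rho_psd _].
exact/complex_Re_ge0/mxtrace_mul_psd_ge0.
Qed.

Lemma sum_prob X (P : X -> 'M[R[i]]_d) t :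
  povm P -> Theta t -> \sum_x prob rho P t x = 1.
Proof.
move=> [_ P_sum] /rho_density[_ tr_rho].
by rewrite -complex_Re_sum -raddf_sum -mulmx_sumr P_sum mulmx1 /= tr_rho.
Qed.

Lemma expect_cst X (P : X -> 'M[R[i]]_d) c t :
  povm P -> Theta t -> expect rho P (fun=> c) t = c.
Proof. by move=> povmP Tt; rewrite /expect -mulr_sumr sum_prob ?mulr1. Qed.

Lemma expect_affine X (P : X -> 'M[R[i]]_d) (f : X -> R) u a t :
  povm P -> Theta t ->
  expect rho P (fun x => u + a * f x) t = u + a * expect rho P f t.
Proof.
move=> povmP Tt; rewrite /expect.
under eq_bigr => x _ do rewrite mulrDl -mulrA.
by rewrite big_split /= -!mulr_sumr sum_prob // mulr1.
Qed.

Lemma prob_entrywise X (P : X -> 'M[R[i]]_d) x :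
  prob rho P ^~ x = \sum_(a < d) \sum_(b < d) (fun s =>
     complex.Re (P x b a) * complex.Re (rho s a b)
     - complex.Im (P x b a) * complex.Im (rho s a b)).
Proof.
apply/funext => s; rewrite !fct_sumE /prob /mxtrace complex_Re_sum.
apply: eq_bigr => a _; rewrite fct_sumE mxE complex_Re_sum.
by apply: eq_bigr => b _; rewrite complex_ReM mulrC; ring.
Qed.

Lemma derivable_prob X (P : X -> 'M[R[i]]_d) x t j :
  Theta t -> derivable (prob rho P ^~ x) t (ev R j).
Proof.
move=> Tt; rewrite prob_entrywise; apply: derivable_sum => a; apply: derivable_sum => b.
have [dRe dIm] := rho_derivable a b j Tt.
have := derivableB (derivableZ (k := complex.Re (P x b a)) dRe)
                  (derivableZ (k := complex.Im (P x b a)) dIm).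
exact.
Qed.

Lemma derive_expect X (P : X -> 'M[R[i]]_d) (f : X -> R) t j : Theta t ->
  'D_(ev R j) (expect rho P f) t
  = \sum_x f x * 'D_(ev R j) (prob rho P ^~ x) t.
Proof.
move=> Tt; have dterm x : derivable (fun s => f x * prob rho P s x) t (ev R j).
  by have := derivableZ (k := f x) (derivable_prob (P := P) (x := x) (j := j) Tt); exact.
have -> : expect rho P f = \sum_x (fun s => f x * prob rho P s x).
  by apply/funext => s; rewrite fct_sumE.
(* [D] is found by instance resolution when rewriting with [derive_val]. *)
have D := derive_big (index_enum X) dterm.
rewrite derive_val; apply: eq_bigr => x _.
by have := deriveZ (f x) (derivable_prob (P := P) (x := x) (j := j) Tt); exact.
Qed.

Lemma sum_derive_prob X (P : X -> 'M[R[i]]_d) t j : povm P -> Theta t ->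
  \sum_x 'D_(ev R j) (prob rho P ^~ x) t = 0.
Proof.
move=> povmP Tt; have := derive_expect P (fun=> 1) j Tt.
under eq_bigr do rewrite mul1r.
move=> <-; rewrite (@derive_eq_on_open _ _ Theta _ (cst 1)) ?derive_cst // => s Ts.
exact: expect_cst.
Qed.

Lemma loc_unbiased_centered X (P : X -> 'M[R[i]]_d) (f : X -> 'I_n -> R) theta :
  povm P -> Theta theta ->
  (forall i l, \sum_x f x i * 'D_(ev R l) (prob rho P ^~ x) theta = (i == l)%:R) ->
  loc_unbiased rho id P
    (fun x => \row_i (theta 0 i + f x i - expect rho P (f^~ i) theta)) theta.
Proof.
move=> povmP Tth dual i; set c := expect rho P (f^~ i) theta.
have -> : (fun x => (\row_i (theta 0 i + f x i - expect rho P (f^~ i) theta)) 0 i)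
    = (fun x => (theta 0 i - c) + 1 * f x i).
  by apply/funext => x; rewrite mxE /c; ring.
split; first by rewrite expect_affine // mul1r subrK.
move=> l; rewrite derive_expect //.
under eq_bigr do rewrite mulrDl mul1r.
by rewrite big_split /= -mulr_sumr sum_derive_prob // mulr0 add0r dual.
Qed.

Lemma exists_unbiased_estimator theta :
  Theta theta -> regular_classical_povm_exists rho theta ->
  exists X (P : X -> 'M[R[i]]_d) (th : X -> 'rV[R]_n),
    povm P /\ loc_unbiased rho id P th theta.
Proof.
move=> Tth [X [P [povmP [prob_gt0 scores_free]]]].
have [g dual_g] := exists_dual_family scores_free.
pose f x i := g x i / prob rho P theta x.
exists X, P, (fun x => \row_i (theta 0 i + f x i - expect rho P (f^~ i) theta)).
split=> //; apply: loc_unbiased_centered => // i l.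
by rewrite -(dual_g i l); apply: eq_bigr => x _; rewrite /f mulrA mulrAC.
Qed.
End Model.

Section Mixture.
Variables (R : realType) (d n : nat) (rho : 'rV[R]_n -> 'M[R[i]]_d).
Variables (X Y : finType) (c : R) (P : X -> 'M[R[i]]_d) (P' : Y -> 'M[R[i]]_d).

Definition mixture (z : X + Y) : 'M[R[i]]_d :=
  match z with inl x => c%:C%C *: P x | inr y => (1 - c)%:C%C *: P' y end.

Lemma expect_mixture (g : X + Y -> R) t : expect rho mixture g t =
  c * expect rho P (g \o inl) t + (1 - c) * expect rho P' (g \o inr) t.
Proof.
rewrite /expect big_sumType /= !mulr_sumr.
by congr (_ + _); apply: eq_bigr => z _;
  rewrite /prob -scalemxAr mxtraceZ complex_ReM /= mul0r subr0; ring.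
Qed.

Lemma psd_scale_ge0 (a : R) (A : 'M[R[i]]_d) : 0 <= a -> psd A -> psd (a%:C%C *: A).
Proof.
by move=> a_ge0 psdA v; rewrite -scalemxAr -scalemxAl mxE mulr_ge0 ?ler0c.
Qed.

Lemma povm_mixture : 0 <= c <= 1 -> povm P -> povm P' -> povm mixture.
Proof.
move=> /andP[c_ge0 c_le1] [psdP sumP] [psdP' sumP']; split.
  by case=> [x|y]; apply: psd_scale_ge0 => //; rewrite subr_ge0.
rewrite big_sumType /= -!scaler_sumr sumP sumP' -scalerDl.
suff -> : c%:C%C + (1 - c)%:C%C = 1 :> R[i] by rewrite scale1r.
by rewrite -rmorphD addrC subrK.
Qed.
End Mixture.

Lemma mxtrace_block_scalar (F : pzRingType) (m k : nat) (W : 'M[F]_m) (e : F)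
    (M : 'M[F]_(m + k)) :
  \tr (block_mx W 0 0 e%:M *m M) = \tr (W *m ulsubmx M) + e * \tr (drsubmx M).
Proof.
rewrite -{1}(submxK M) mulmx_block mxtrace_block !mul0mx addr0 add0r.
by rewrite mul_scalar_mx mxtraceZ.
Qed.

Section NuisanceParameters.
Variables (R : realType) (d m k : nat) (rho : 'rV[R]_(m + k) -> 'M[R[i]]_d).
Variable Theta : set 'rV[R]_(m + k).
Hypothesis Theta_open : open Theta.
Hypothesis rho_density : forall t, Theta t -> density_matrix (rho t).
Variable theta : 'rV[R]_(m + k).
Hypothesis Theta_theta : Theta theta.
Implicit Types (X : finType) (W : 'M[R]_m).

Section MixedEstimator.
Variables (X Y : finType) (P : X -> 'M[R[i]]_d) (P' : Y -> 'M[R[i]]_d).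
Variables (th : X -> 'rV[R]_m) (eta : Y -> 'rV[R]_(m + k)) (c : R).
Hypotheses (povmP : povm P) (povmP' : povm P') (c01 : 0 < c < 1).

Definition mixed_estimator (z : X + Y) : 'rV[R]_(m + k) :=
  \row_j match z, fintype.split j with
    | inl x, inl i => theta 0 j + c^-1 * (th x 0 i - theta 0 j)
    | inr y, inr _ => theta 0 j + (1 - c)^-1 * (eta y 0 j - theta 0 j)
    | _, _ => theta 0 j
    end.

Let c_neq0 : c != 0. Proof. by case/andP: c01 => c_gt0 _; rewrite gt_eqF. Qed.
Let c1_neq0 : 1 - c != 0. Proof. by case/andP: c01 => _ c_lt1; rewrite subr_eq0 gt_eqF. Qed.

Lemma expect_mixed_lshift (i : 'I_m) t : Theta t ->
  expect rho (mixture c P P') (fun z => mixed_estimator z 0 (lshift k i)) t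
  = expect rho P (fun x => th x 0 i) t.
Proof.
move=> Tt; rewrite expect_mixture /comp; set tj := theta 0 (lshift k i).
have -> : (fun x => mixed_estimator (inl x) 0 (lshift k i))
    = (fun x => (tj - c^-1 * tj) + c^-1 * th x 0 i).
  by apply/funext => x; rewrite mxE (unsplitK (inl i)) /= /tj; ring.
have -> : (fun y => mixed_estimator (inr y) 0 (lshift k i)) = (fun=> tj).
  by apply/funext => y; rewrite mxE (unsplitK (inl i)).
by rewrite (expect_affine rho_density) ?(expect_cst rho_density) //; field.
Qed.

Lemma expect_mixed_rshift (i : 'I_k) t : Theta t ->
  expect rho (mixture c P P') (fun z => mixed_estimator z 0 (rshift m i)) t
  = expect rho P' (fun y => eta y 0 (rshift m i)) t.
Proof.
move=> Tt; rewrite expect_mixture /comp; set tj := theta 0 (rshift m i).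
have -> : (fun x => mixed_estimator (inl x) 0 (rshift m i)) = (fun=> tj).
  by apply/funext => x; rewrite mxE (unsplitK (inr i)).
have -> : (fun y => mixed_estimator (inr y) 0 (rshift m i))
    = (fun y => (tj - (1 - c)^-1 * tj) + (1 - c)^-1 * eta y 0 (rshift m i)).
  by apply/funext => y; rewrite mxE (unsplitK (inr i)) /= /tj; ring.
by rewrite (expect_affine rho_density) ?(expect_cst rho_density) //; field.
Qed.

Lemma loc_unbiased_mixed :
  loc_unbiased rho (@idxI m k) P th theta -> loc_unbiased rho id P' eta theta ->
  loc_unbiased rho id (mixture c P P') mixed_estimator theta.
Proof.
move=> luP luP' j; rewrite -(splitK j); case: (fintype.split j) => i /=.
  have [E_th D_th] := luP i; split; first by rewrite expect_mixed_lshift.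
  by move=> l; rewrite (derive_eq_on_open _ Theta_open Theta_theta (expect_mixed_lshift i)).
have [E_eta D_eta] := luP' (rshift m i); split; first by rewrite expect_mixed_rshift.
by move=> l; rewrite (derive_eq_on_open _ Theta_open Theta_theta (expect_mixed_rshift i)).
Qed.

Lemma mse_mixed_ul :
  ulsubmx (mse rho id (mixture c P P') mixed_estimator theta)
  = c^-1 *: mse rho (@idxI m k) P th theta.
Proof.
apply/matrixP => i i'; rewrite !mxE expect_mixture /comp.
set e := fun x => (th x 0 i - theta 0 (idxI k i)) * (th x 0 i' - theta 0 (idxI k i')).
have -> : (fun x => (mixed_estimator (inl x) 0 (lshift k i) - theta 0 (id (lshift k i)))
                  * (mixed_estimator (inl x) 0 (lshift k i') - theta 0 (id (lshift k i'))))
    = (fun x => 0 + c^-1 * c^-1 * e x).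
  by apply/funext => x; rewrite !mxE !(unsplitK (inl _)) /= /e; ring.
have -> : (fun y => (mixed_estimator (inr y) 0 (lshift k i) - theta 0 (id (lshift k i)))
                  * (mixed_estimator (inr y) 0 (lshift k i') - theta 0 (id (lshift k i'))))
    = (fun=> 0).
  by apply/funext => y; rewrite !mxE !(unsplitK (inl _)) /= subrr mul0r.
by rewrite (expect_affine rho_density) ?(expect_cst rho_density) //; field.
Qed.
End MixedEstimator.

Lemma loc_unbiased_lsub X (P : X -> 'M[R[i]]_d) (th : X -> 'rV[R]_(m + k)) :
  loc_unbiased rho id P th theta ->
  loc_unbiased rho (@idxI m k) P (fun x => lsubmx (th x)) theta.
Proof.
move=> lu i; have -> : (fun x => lsubmx (th x) 0 i) = (fun x => th x 0 (lshift k i)).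
  by apply/funext => x; rewrite mxE.
exact: lu.
Qed.

Lemma mse_lsub X (P : X -> 'M[R[i]]_d) (th : X -> 'rV[R]_(m + k)) :
  mse rho (@idxI m k) P (fun x => lsubmx (th x)) theta = ulsubmx (mse rho id P th theta).
Proof. by apply/matrixP => i j; rewrite !mxE; congr expect; apply/funext => x; rewrite !mxE. Qed.

Lemma mxtrace_mse_ge0 p (idx : 'I_p -> 'I_(m + k)) X (P : X -> 'M[R[i]]_d)
    (th : X -> 'rV[R]_p) (W : 'M[R]_p) :
  posdef_weight W -> povm P -> 0 <= \tr (W *m mse rho idx P th theta).
Proof.
move=> [_ W_pos] povmP; pose u x : 'cV[R]_p := \col_i (th x 0 i - theta 0 (idx i)).
have -> : mse rho idx P th theta = \sum_x prob rho P theta x *: (u x *m (u x)^T).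
  apply/matrixP => i j; rewrite summxE mxE; apply: eq_bigr => x _.
  by rewrite !mxE big_ord1 !mxE mulrC.
rewrite mulmx_sumr raddf_sum /=; apply: sumr_ge0 => x _.
rewrite -scalemxAr mxtraceZ mulr_ge0 ?(prob_ge0 rho_density) //.
rewrite mulmxA mxtrace_mulC mulmxA trace_mx11.
by have [->|u_neq0] := eqVneq (u x) 0; [rewrite trmx0 !mul0mx mxE | exact/ltW/W_pos].
Qed.

Lemma mxtrace_drsub_mse_ge0 X (P : X -> 'M[R[i]]_d) (th : X -> 'rV[R]_(m + k)) :
  povm P -> 0 <= \tr (drsubmx (mse rho id P th theta)).
Proof.
move=> povmP; apply: sumr_ge0 => i _; rewrite !mxE; apply: sumr_ge0 => x _.
by rewrite -expr2 mulr_ge0 ?sqr_ge0 ?(prob_ge0 rho_density).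
Qed.

Definition unbiased_risks W : set (R * R) :=
  [set p | exists X (P : X -> 'M[R[i]]_d) (th : X -> 'rV[R]_(m + k)),
     povm P /\ loc_unbiased rho id P th theta /\
     p = (\tr (W *m ulsubmx (mse rho id P th theta)), \tr (drsubmx (mse rho id P th theta)))].

Lemma C_E_risks W : C_E rho theta W = inf [set p.1 | p in unbiased_risks W].
Proof.
congr inf; apply/seteqP; split.
  by move=> _ [X [P [th [povmP [lu ->]]]]]; eexists; first by exists X, P, th.
by move=> _ [_ [X [P [th [povmP [lu ->]]]]] <-]; exists X, P, th.
Qed.

Lemma C_full_block_risks W (eps : R) :
  C_full rho theta (block_mx W 0 0 eps%:M)
  = inf [set p.1 + eps * p.2 | p in unbiased_risks W].
Proof.
congr inf; apply/seteqP; split.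
  move=> _ [X [P [th [povmP [lu ->]]]]]; rewrite mxtrace_block_scalar.
  by eexists; first by exists X, P, th.
move=> _ [_ [X [P [th [povmP [lu ->]]]]] <-].
by exists X, P, th; rewrite mxtrace_block_scalar.
Qed.

Hypothesis rho_derivable : entries_derivable rho Theta.
Hypothesis povm_regular : regular_classical_povm_exists rho theta.

Let unbiased_estimator :=
  exists_unbiased_estimator Theta_open rho_density rho_derivable Theta_theta povm_regular.

Lemma C_I_eq_C_E W : posdef_weight W -> C_I rho theta W = C_E rho theta W.
Proof.
move=> W_pos; have [Y [P' [eta [povmP' lu']]]] := unbiased_estimator.
apply: inf_eq_of_rescaled_sub.
- move=> _ [X [P [th [povmP [lu ->]]]]]; exists X, P, (fun x => lsubmx (th x)).
  by split=> //; split; [exact: loc_unbiased_lsub | rewrite mse_lsub].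
- by eexists; exists Y, P', eta.
- by move=> _ [X [P [th [povmP [lu ->]]]]]; exact: mxtrace_mse_ge0.
move=> _ c [X [P [th [povmP [lu ->]]]]] c01.
exists (X + Y)%type, (mixture c P P'), (mixed_estimator th eta c).
split; first by apply: povm_mixture => //; case/andP: c01 => /ltW -> /ltW ->.
split; first exact: loc_unbiased_mixed.
by rewrite mse_mixed_ul // -scalemxAr mxtraceZ.
Qed.

Lemma C_full_block_cvg W : posdef_weight W ->
  (fun eps => C_full rho theta (block_mx W 0 0 eps%:M)) @ at_right 0
  --> C_E rho theta W.
Proof.
move=> W_pos; rewrite C_E_risks.
under eq_fun do rewrite C_full_block_risks.
apply: cvg_inf_perturbed.
- have [X [P [th [povmP lu]]]] := unbiased_estimator.
  by eexists; exists X, P, th.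
- exists 0 => _ [_ [X [P [th [povmP [lu ->]]]]] <-] /=.
  by rewrite -mse_lsub; exact: mxtrace_mse_ge0.
by move=> _ [X [P [th [povmP [lu ->]]]]]; exact: mxtrace_drsub_mse_ge0.
Qed.
End NuisanceParameters.

Theorem theorem1 (R : realType) (d m k : nat) (hk : (0 < k)%N)
    (Theta : set 'rV[R]_(m + k)) (rho : 'rV[R]_(m + k) -> 'M[R[i]]_d)
    (theta : 'rV[R]_(m + k)) (W : 'M[R]_m) :
  regular_model rho Theta -> Theta theta ->
  regular_classical_povm_exists rho theta ->
  posdef_weight W ->
  C_I rho theta W = C_E rho theta W /\
  (fun eps : R => C_full rho theta (block_mx W 0 0 (eps%:M)))
      @ at_right 0 --> C_I rho theta W.
Proof.
case=> Theta_open [rho_density [/smooth_entries_derivable rho_derivable _]].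
move=> Theta_theta povm_regular W_pos.
have C_IE := C_I_eq_C_E Theta_open rho_density Theta_theta rho_derivable povm_regular W_pos.
split=> //; rewrite C_IE.
exact (C_full_block_cvg Theta_open rho_density Theta_theta rho_derivable povm_regular W_pos).
Qed.
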